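(* Let $r,\beta_0,a,\mu>0$ with $\beta_0<1$, and consider the family of systems $$\dot S = S(A-S)-\beta_0 IS,\qquad \dot I=\beta_0 IS-\mu I-\frac{rI}{a+I}$$ with bifurcation parameter $A>0$ (equivalently $\mathcal{R}_0=\beta_0A/(\mu+r/a)$). At the parameter value where $\mathcal{R}_0=\phi_0:=1-\dfrac{(a\beta_0-\sqrt r)^2}{a\mu+r}$, the system undergoes a saddle-node bifurcation (of endemic equilibria).
   Context: $\mu$ denotes the total death rate of infectious individuals. Endemic equilibria are zeros of the vector field with $I\ne0$. A saddle-node bifurcation is the generic codimension-one bifurcation in which two equilibria (here a sink and a saddle) coalesce into a single equilibrium with a zero eigenvalue and disappear as the parameter crosses the critical value. *)

From Stdlib Require Import Reals.
From Coquelicot Require Import Coquelicot.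
Open Scope R_scope.

(* A planar vector field depending on a real parameter p:
     x' = F1 p x y,   y' = F2 p x y. *)

Definition is_equilibrium (F1 F2 : R -> R -> R -> R) (p x y : R) : Prop :=
  F1 p x y = 0 /\ F2 p x y = 0.

Definition jac11 (F1 : R -> R -> R -> R) p x y := Derive (fun u => F1 p u y) x.
Definition jac12 (F1 : R -> R -> R -> R) p x y := Derive (fun v => F1 p x v) y.
Definition jac21 (F2 : R -> R -> R -> R) p x y := Derive (fun u => F2 p u y) x.
Definition jac22 (F2 : R -> R -> R -> R) p x y := Derive (fun v => F2 p x v) y.

Definition is_eigenvalue (F1 F2 : R -> R -> R -> R) (p x y : R) (lam : C) : Prop :=
  ((RtoC (jac11 F1 p x y) - lam) * (RtoC (jac22 F2 p x y) - lam)
   - RtoC (jac12 F1 p x y) * RtoC (jac21 F2 p x y))%C = 0%C.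

Definition is_sink F1 F2 p x y : Prop :=
  forall lam : C, is_eigenvalue F1 F2 p x y lam -> Re lam < 0.

Definition is_saddle F1 F2 p x y : Prop :=
  exists l1 l2 : R, is_eigenvalue F1 F2 p x y (RtoC l1) /\
                    is_eigenvalue F1 F2 p x y (RtoC l2) /\ l1 < 0 < l2.

Definition near_pt (d x0 y0 x y : R) : Prop := Rabs (x - x0) < d /\ Rabs (y - y0) < d.

(* Saddle-node bifurcation at parameter value p0 of the equilibria satisfying the
   admissibility predicate E (here: endemic, I <> 0):
   - at p0 there is an admissible equilibrium (x0,y0) having eigenvalue 0, and it is
     the only admissible equilibrium in a neighbourhood U of (x0,y0);
   - on one side of p0 (sgn = +1 or -1 fixes which side) there is no admissible
     equilibrium in U;
   - on the other side there are exactly two admissible equilibria in U, a sink and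
     a saddle, and they coalesce into (x0,y0) as p -> p0. *)
Definition saddle_node_bifurcation (F1 F2 : R -> R -> R -> R)
    (E : R -> R -> Prop) (p0 : R) : Prop :=
  exists x0 y0 : R,
    E x0 y0 /\ is_equilibrium F1 F2 p0 x0 y0 /\ is_eigenvalue F1 F2 p0 x0 y0 (RtoC 0) /\
    exists d eps sgn : R, 0 < d /\ 0 < eps /\ (sgn = 1 \/ sgn = -1) /\
      (forall x y, near_pt d x0 y0 x y -> E x y -> is_equilibrium F1 F2 p0 x y ->
          x = x0 /\ y = y0) /\
      (forall p, 0 < sgn * (p - p0) < eps ->
         forall x y, near_pt d x0 y0 x y -> E x y -> ~ is_equilibrium F1 F2 p x y) /\
      (forall p, 0 < sgn * (p0 - p) < eps ->
         exists x1 y1 x2 y2,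
           near_pt d x0 y0 x1 y1 /\ E x1 y1 /\ is_equilibrium F1 F2 p x1 y1 /\
             is_sink F1 F2 p x1 y1 /\
           near_pt d x0 y0 x2 y2 /\ E x2 y2 /\ is_equilibrium F1 F2 p x2 y2 /\
             is_saddle F1 F2 p x2 y2 /\
           (forall x y, near_pt d x0 y0 x y -> E x y -> is_equilibrium F1 F2 p x y ->
              (x = x1 /\ y = y1) \/ (x = x2 /\ y = y2))) /\
      (forall eta, 0 < eta -> exists eps', 0 < eps' /\
         forall p, 0 < sgn * (p0 - p) < eps' ->
           forall x y, near_pt d x0 y0 x y -> E x y -> is_equilibrium F1 F2 p x y ->
             near_pt eta x0 y0 x y).

Definition SI_S (beta0 : R) (A S I : R) : R := S * (A - S) - beta0 * I * S.
Definition SI_I (beta0 mu r a : R) (A S I : R) : R :=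
  beta0 * I * S - mu * I - r * I / (a + I).

Definition endemic (S I : R) : Prop := I <> 0.

Definition basic_R0 (beta0 mu r a A : R) : R := beta0 * A / (mu + r / a).
Definition phi0 (beta0 mu r a : R) : R :=
  1 - (a * beta0 - sqrt r) ^ 2 / (a * mu + r).

(* Write q = sqrt r, I_star = q / beta0 - a, S_star = A_star - beta0 I_star; the hypothesis
   R0 = phi0 says exactly beta0 A_star = mu - a beta0^2 + 2 beta0 q.  An endemic equilibrium
   with S <> 0 has S = A - beta0 I, and its I-equation becomes the parabola
     beta0 (I - I_star)^2 = (A - A_star) (a + I).
   Near (S_star, I_star) there is therefore no endemic equilibrium for A < A_star, only
   (S_star, I_star) itself at A = A_star, and for A > A_star exactly two, on either side of
   I_star and tending to it with A.  At such an equilibrium the Jacobian has negative trace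
   (this is where beta0 < 1 enters) and its determinant has the sign of I (I - I_star), so one
   of the two is a sink and the other a saddle; at (S_star, I_star) the determinant vanishes. *)

From Stdlib Require Import Reals Lra Psatz.
From Coquelicot Require Import Coquelicot.
Open Scope R_scope.

Definition jac_trace (F1 F2 : R -> R -> R -> R) p x y : R :=
  jac11 F1 p x y + jac22 F2 p x y.

Definition jac_det (F1 F2 : R -> R -> R -> R) p x y : R :=
  jac11 F1 p x y * jac22 F2 p x y - jac12 F1 p x y * jac21 F2 p x y.

Lemma is_eigenvalue_complex F1 F2 p x y (u v : R) :
  is_eigenvalue F1 F2 p x y (u, v) ->
  u * u - jac_trace F1 F2 p x y * u + jac_det F1 F2 p x y = v * v /\
  v * (jac_trace F1 F2 p x y - 2 * u) = 0.
Proof.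
  unfold is_eigenvalue, jac_trace, jac_det; intro h.
  pose proof (f_equal fst h) as hre; pose proof (f_equal snd h) as him.
  cbn in hre, him; split; lra.
Qed.

Lemma is_eigenvalue_real F1 F2 p x y (l : R) :
  is_eigenvalue F1 F2 p x y (RtoC l) <->
  l * l - jac_trace F1 F2 p x y * l + jac_det F1 F2 p x y = 0.
Proof.
  unfold is_eigenvalue, jac_trace, jac_det; split; intro h.
  - pose proof (f_equal fst h) as hre; cbn in hre; lra.
  - apply injective_projections; cbn; lra.
Qed.

Lemma is_sink_trace_det F1 F2 p x y :
  jac_trace F1 F2 p x y < 0 -> 0 < jac_det F1 F2 p x y -> is_sink F1 F2 p x y.
Proof.
  intros hT hD [u v] hlam; unfold Re; cbn.
  destruct (is_eigenvalue_complex _ _ _ _ _ _ _ hlam) as [hre him].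
  destruct (Req_dec v 0) as [-> | hv].
  - destruct (Rlt_or_le u 0) as [hu | hu]; [exact hu | nra].
  - apply Rmult_integral in him as [him | him]; [contradiction | lra].
Qed.

Lemma is_saddle_det F1 F2 p x y :
  jac_det F1 F2 p x y < 0 -> is_saddle F1 F2 p x y.
Proof.
  unfold is_saddle; set (T := jac_trace F1 F2 p x y); set (D := jac_det F1 F2 p x y).
  intro hD.
  assert (hdisc : 0 <= T * T - 4 * D) by nra.
  pose proof (sqrt_sqrt _ hdisc) as hs; pose proof (sqrt_pos (T * T - 4 * D)) as hs0.
  set (s := sqrt (T * T - 4 * D)) in *.
  assert (hTs : T < s /\ - T < s) by (split; nra).
  exists ((T - s) / 2), ((T + s) / 2).
  rewrite !is_eigenvalue_real; fold T D; repeat split; nra.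
Qed.

(* If |x| >= rho, then (b rho - t) |x| <= b x^2 - t |x| <= t c forces b rho^2 <= t (rho + c). *)
Lemma parabola_root_small b c t x rho : 0 < b -> 0 < c -> 0 < rho -> 0 <= t ->
  t < b * rho ^ 2 / (rho + c) -> b * x ^ 2 = t * (x + c) -> Rabs x < rho.
Proof.
  intros hb hc hrho ht htol hx.
  apply Rmult_lt_compat_r with (r := rho + c) in htol; [|lra].
  unfold Rdiv in htol; rewrite Rmult_assoc, Rinv_l, Rmult_1_r in htol by lra.
  destruct (Rlt_or_le (Rabs x) rho) as [h | h]; [exact h | exfalso].
  assert (hx2 : x ^ 2 = Rabs x * Rabs x) by (rewrite <- Rabs_mult, Rabs_pos_eq; nra).
  assert (t * x <= t * Rabs x) by (apply Rmult_le_compat_l; [lra | apply RRle_abs]).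
  assert (b * rho * Rabs x <= b * x ^ 2)
    by (rewrite hx2, <- Rmult_assoc; apply Rmult_le_compat_r; [apply Rabs_pos | nra]).
  assert (t < b * rho) by nra.
  nra.
Qed.

Lemma parabola_two_roots b c t : 0 < b -> 0 < c -> 0 < t ->
  exists x1 x2, x1 < 0 < x2 /\
    forall x, b * x ^ 2 = t * (x + c) <-> x = x1 \/ x = x2.
Proof.
  intros hb hc ht.
  assert (hbtc : 0 < b * t * c) by (repeat apply Rmult_lt_0_compat; lra).
  assert (hdisc : 0 <= t * t + 4 * b * t * c) by nra.
  pose proof (sqrt_sqrt _ hdisc) as hs; pose proof (sqrt_pos (t * t + 4 * b * t * c)) as hs0.
  set (s := sqrt (t * t + 4 * b * t * c)) in *.
  assert (hts : t < s) by nra.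
  exists ((t - s) / (2 * b)), ((t + s) / (2 * b)); split.
  - split; [apply Rdiv_neg_pos | apply Rdiv_lt_0_compat]; lra.
  - intro x.
    assert (hfact : b * x ^ 2 - t * (x + c) =
                    b * (x - (t - s) / (2 * b)) * (x - (t + s) / (2 * b)))
      by (replace (b * (x - (t - s) / (2 * b)) * (x - (t + s) / (2 * b)))
            with (b * x ^ 2 - t * x + (t * t - s * s) / (4 * b)) by (field; lra);
          rewrite hs; field; lra).
    split.
    + intro hx; assert (h0 : b * (x - (t - s) / (2 * b)) * (x - (t + s) / (2 * b)) = 0) by lra.
      apply Rmult_integral in h0 as [h0 | h0]; [apply Rmult_integral in h0 as [h0 | h0] |];
        [lra | left | right]; lra.
    + intros [-> | ->]; apply Rminus_diag_uniq; rewrite hfact; ring_simplify; lra.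
Qed.

Section SIJacobian.
Variables beta0 mu r a : R.

Lemma jac11_SI A S I : jac11 (SI_S beta0) A S I = A - 2 * S - beta0 * I.
Proof. apply is_derive_unique; unfold SI_S; auto_derive; [easy | ring]. Qed.

Lemma jac12_SI A S I : jac12 (SI_S beta0) A S I = - beta0 * S.
Proof. apply is_derive_unique; unfold SI_S; auto_derive; [easy | ring]. Qed.

Lemma jac21_SI A S I : jac21 (SI_I beta0 mu r a) A S I = beta0 * I.
Proof. apply is_derive_unique; unfold SI_I; auto_derive; [easy | ring]. Qed.

Lemma jac22_SI A S I : a + I <> 0 ->
  jac22 (SI_I beta0 mu r a) A S I = beta0 * S - mu - r * a / (a + I) ^ 2.
Proof.
  intro hu; apply is_derive_unique; unfold SI_I; auto_derive; [easy | field; exact hu].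
Qed.

Lemma SI_equilibrium_iff A S I : S <> 0 -> I <> 0 -> a + I <> 0 ->
  is_equilibrium (SI_S beta0) (SI_I beta0 mu r a) A S I <->
  S = A - beta0 * I /\ beta0 * S - mu - r / (a + I) = 0.
Proof.
  intros hS hI hu; unfold is_equilibrium, SI_S, SI_I.
  replace (S * (A - S) - beta0 * I * S) with (S * (A - beta0 * I - S)) by ring.
  replace (beta0 * I * S - mu * I - r * I / (a + I))
    with (I * (beta0 * S - mu - r / (a + I))) by (field; exact hu).
  split.
  - intros [h1 h2]; apply Rmult_integral in h1, h2; split; [lra | tauto].
  - intros [-> ->]; split; ring.
Qed.

Section AtEquilibrium.
Variables A S I : R.
Hypotheses (hu : 0 < a + I) (hSeq : S = A - beta0 * I)
  (hIeq : beta0 * S - mu - r / (a + I) = 0).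

Lemma SI_jac_trace :
  jac_trace (SI_S beta0) (SI_I beta0 mu r a) A S I = - S + r * I / (a + I) ^ 2.
Proof.
  unfold jac_trace; rewrite jac11_SI, jac22_SI by lra.
  replace (A - 2 * S - beta0 * I) with (- S) by lra.
  replace (beta0 * S - mu) with (r / (a + I)) by lra.
  field; lra.
Qed.

Lemma SI_jac_det :
  jac_det (SI_S beta0) (SI_I beta0 mu r a) A S I =
  S * I * (beta0 ^ 2 * (a + I) ^ 2 - r) / (a + I) ^ 2.
Proof.
  unfold jac_det; rewrite jac11_SI, jac12_SI, jac21_SI, jac22_SI by lra.
  replace (A - 2 * S - beta0 * I) with (- S) by lra.
  replace (beta0 * S - mu) with (r / (a + I)) by lra.
  field; lra.
Qed.

(* By the I-equation, beta0 times the trace is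
   - mu - (1 - beta0) r / (a + I) - beta0 r a / (a + I)^2. *)
Lemma SI_jac_trace_neg : 0 < mu -> 0 < r -> 0 < a -> 0 < beta0 <= 1 ->
  jac_trace (SI_S beta0) (SI_I beta0 mu r a) A S I < 0.
Proof.
  intros hmu hr ha hb; rewrite SI_jac_trace.
  assert (hbS : beta0 * S = mu + r / (a + I)) by lra.
  assert (key : beta0 * (- S + r * I / (a + I) ^ 2) =
                - mu - (1 - beta0) * (r / (a + I)) - beta0 * r * a / (a + I) ^ 2).
  { rewrite Rmult_plus_distr_l, Ropp_mult_distr_r_reverse, hbS. field; lra. }
  assert (0 < r / (a + I)) by (apply Rdiv_lt_0_compat; lra).
  assert (0 < beta0 * r * a / (a + I) ^ 2)
    by (apply Rdiv_lt_0_compat; [apply Rmult_lt_0_compat; [nra | lra] | nra]).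
  nra.
Qed.

Lemma SI_sink : 0 < mu -> 0 < r -> 0 < a -> 0 < beta0 <= 1 -> 0 < S ->
  0 < I * (beta0 ^ 2 * (a + I) ^ 2 - r) ->
  is_sink (SI_S beta0) (SI_I beta0 mu r a) A S I.
Proof.
  intros hmu hr ha hb hS hsign; apply is_sink_trace_det.
  - exact (SI_jac_trace_neg hmu hr ha hb).
  - rewrite SI_jac_det, Rmult_assoc; apply Rdiv_lt_0_compat; nra.
Qed.

Lemma SI_saddle : 0 < S -> I * (beta0 ^ 2 * (a + I) ^ 2 - r) < 0 ->
  is_saddle (SI_S beta0) (SI_I beta0 mu r a) A S I.
Proof.
  intros hS hsign; apply is_saddle_det.
  rewrite SI_jac_det, Rmult_assoc; unfold Rdiv.
  apply Rmult_neg_pos; [nra | apply Rinv_0_lt_compat; nra].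
Qed.

End AtEquilibrium.
End SIJacobian.

Lemma threshold_Astar beta0 mu r a A : 0 < r -> 0 < beta0 -> 0 < a -> 0 < mu ->
  basic_R0 beta0 mu r a A = phi0 beta0 mu r a ->
  beta0 * A = mu - a * beta0 ^ 2 + 2 * beta0 * sqrt r.
Proof.
  intros hr hb ha hmu hA.
  assert (hq : sqrt r * sqrt r = r) by (apply sqrt_sqrt; lra).
  assert (hden : a * mu + r <> 0) by nra.
  assert (h : beta0 * A * a = a * mu + r - (a * beta0 - sqrt r) ^ 2).
  { replace (beta0 * A * a) with (basic_R0 beta0 mu r a A * (a * mu + r))
      by (unfold basic_R0; field; split; [nra | lra]).
    rewrite hA; unfold phi0; field; exact hden. }
  apply (Rmult_eq_reg_r a); [rewrite h, <- hq at 1; ring | lra].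
Qed.

(* [q] stands for [sqrt r]; keeping it abstract lets [r] be rewritten as [q * q]. *)
Section Threshold.
Variables beta0 mu r a q Astar : R.
Hypotheses (hr : 0 < r) (hb : 0 < beta0) (hb1 : beta0 < 1) (ha : 0 < a) (hmu : 0 < mu)
  (hq0 : 0 < q) (hq : q * q = r) (hnd : a * beta0 <> q)
  (hAstar : beta0 * Astar = mu - a * beta0 ^ 2 + 2 * beta0 * q).

Definition Istar := q / beta0 - a.
Definition Sstar := Astar - beta0 * Istar.

Lemma a_add_Istar : a + Istar = q / beta0.
Proof. unfold Istar; ring. Qed.

Lemma a_add_Istar_pos : 0 < a + Istar.
Proof. rewrite a_add_Istar; apply Rdiv_lt_0_compat; lra. Qed.

Lemma Sstar_pos : 0 < Sstar.
Proof.
  assert (beta0 * Sstar = mu + beta0 * q)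
    by (unfold Sstar, Istar; rewrite Rmult_minus_distr_l, hAstar; field; lra).
  nra.
Qed.

Lemma Istar_neq0 : Istar <> 0.
Proof.
  assert (h : beta0 * Istar = q - a * beta0) by (unfold Istar; field; lra).
  intro h0; rewrite h0 in h; apply hnd; lra.
Qed.

Lemma SI_I_rate_parabola p I : 0 < a + I ->
  beta0 * (p - beta0 * I) - mu - r / (a + I) =
  beta0 * ((p - Astar) * (a + I) - beta0 * (I - Istar) ^ 2) / (a + I).
Proof.
  intro hu.
  replace mu with (beta0 * Astar + a * beta0 ^ 2 - 2 * beta0 * q)
    by (rewrite hAstar; ring).
  unfold Istar; rewrite <- hq; field; lra.
Qed.

Lemma SI_equilibrium_parabola p S I : 0 < S -> I <> 0 -> 0 < a + I ->
  is_equilibrium (SI_S beta0) (SI_I beta0 mu r a) p S I <->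
  S = p - beta0 * I /\ beta0 * (I - Istar) ^ 2 = (p - Astar) * (a + I).
Proof.
  intros hS hI hu; rewrite SI_equilibrium_iff by lra.
  split; intros [-> h]; split; try reflexivity;
    rewrite SI_I_rate_parabola in * by exact hu.
  - unfold Rdiv in h; apply Rmult_integral in h as [h | h];
      [apply Rmult_integral in h as [h | h] |]; [lra | lra | ].
    exfalso; revert h; apply Rinv_neq_0_compat; lra.
  - rewrite h; field; lra.
Qed.

Lemma SI_det_factor I :
  beta0 ^ 2 * (a + I) ^ 2 - r =
  beta0 * (I - Istar) * (2 * q + beta0 * (I - Istar)).
Proof. unfold Istar; rewrite <- hq; field; lra. Qed.

Lemma Sstar_Istar_equilibrium :
  is_equilibrium (SI_S beta0) (SI_I beta0 mu r a) Astar Sstar Istar.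
Proof.
  apply SI_equilibrium_parabola; [exact Sstar_pos | exact Istar_neq0 | exact a_add_Istar_pos | ].
  split; [reflexivity | ring].
Qed.

Lemma Sstar_Istar_zero_eigenvalue :
  is_eigenvalue (SI_S beta0) (SI_I beta0 mu r a) Astar Sstar Istar (RtoC 0).
Proof.
  apply is_eigenvalue_real.
  assert (hrate : beta0 * Sstar - mu - r / (a + Istar) = 0).
  { unfold Sstar; rewrite SI_I_rate_parabola by exact a_add_Istar_pos.
    unfold Rdiv; ring. }
  rewrite SI_jac_det; [ | exact a_add_Istar_pos | reflexivity | exact hrate].
  rewrite SI_det_factor; unfold Rdiv; ring.
Qed.

(* On the neighbourhood of this radius, S > 0, a + I > 0 and I has the sign of Istar. *)
Definition radius := Rmin Sstar (Rmin (q / beta0) (Rabs Istar)).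

(* For 0 <= A - Astar < window rho, every equilibrium on the parabola has |I - Istar| < rho,
   by [parabola_root_small]. *)
Definition window rho := beta0 * rho ^ 2 / (rho + q / beta0).

Lemma radius_pos : 0 < radius.
Proof.
  apply Rmin_pos; [exact Sstar_pos | apply Rmin_pos].
  - apply Rdiv_lt_0_compat; lra.
  - exact (Rabs_pos_lt _ Istar_neq0).
Qed.

Lemma window_pos rho : 0 < rho -> 0 < window rho.
Proof.
  intro hrho; apply Rdiv_lt_0_compat; [apply Rmult_lt_0_compat; [lra | apply pow_lt; lra] | ].
  assert (0 < q / beta0) by (apply Rdiv_lt_0_compat; lra); lra.
Qed.

Lemma window_lt rho : 0 < rho -> window rho < rho.
Proof.
  intro hrho; assert (hc : 0 < q / beta0) by (apply Rdiv_lt_0_compat; lra).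
  unfold window; apply Rmult_lt_reg_r with (rho + q / beta0); [lra | ].
  unfold Rdiv; rewrite Rmult_assoc, Rinv_l, Rmult_1_r by lra.
  assert (0 < rho * (q * / beta0)) by (apply Rmult_lt_0_compat; lra).
  assert (0 < rho ^ 2) by (apply pow_lt; lra).
  nra.
Qed.

Lemma near_star_facts S I : near_pt radius Sstar Istar S I ->
  0 < S /\ 0 < a + I /\ 0 < Istar * I /\ Rabs (I - Istar) < q / beta0.
Proof.
  intros [hS hI].
  assert (h1 : radius <= Sstar) by apply Rmin_l.
  assert (h2 : radius <= q / beta0) by (eapply Rle_trans; [apply Rmin_r | apply Rmin_l]).
  assert (h3 : radius <= Rabs Istar) by (eapply Rle_trans; [apply Rmin_r | apply Rmin_r]).
  pose proof a_add_Istar; pose proof Istar_neq0.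
  apply Rabs_def2 in hS as [hS1 hS2].
  split; [lra | split; [ | split; [ | lra]]]; apply Rabs_def2 in hI as [hI1 hI2]; [lra | ].
  destruct (Rlt_or_le 0 Istar) as [hpos | hneg].
  - rewrite Rabs_pos_eq in h3 by lra; nra.
  - rewrite Rabs_left1 in h3 by lra; assert (Istar < 0) by lra; nra.
Qed.

Lemma near_star_of_small delta p I : 0 <= p - Astar < delta / 2 ->
  Rabs (I - Istar) < delta / 2 -> near_pt delta Sstar Istar (p - beta0 * I) I.
Proof.
  intros ht hx; split; [ | apply Rabs_def2 in hx; apply Rabs_def1; lra].
  replace (p - beta0 * I - Sstar) with ((p - Astar) - beta0 * (I - Istar))
    by (unfold Sstar; ring).
  apply Rabs_def2 in hx as [hx1 hx2]; apply Rabs_def1; nra.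
Qed.

Lemma parabola_of_equilibrium p S I : near_pt radius Sstar Istar S I ->
  is_equilibrium (SI_S beta0) (SI_I beta0 mu r a) p S I ->
  S = p - beta0 * I /\
  beta0 * (I - Istar) ^ 2 = (p - Astar) * ((I - Istar) + q / beta0).
Proof.
  intros hnear heq; destruct (near_star_facts _ _ hnear) as (hS & hu & hsign & _).
  assert (hI : I <> 0) by (intros ->; lra).
  rewrite SI_equilibrium_parabola in heq by lra.
  replace (I - Istar + q / beta0) with (a + I) by (rewrite <- a_add_Istar; ring).
  exact heq.
Qed.

Lemma SI_classify_near p S I : near_pt radius Sstar Istar S I ->
  is_equilibrium (SI_S beta0) (SI_I beta0 mu r a) p S I ->
  (0 < Istar * (I - Istar) -> is_sink (SI_S beta0) (SI_I beta0 mu r a) p S I) /\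
  (Istar * (I - Istar) < 0 -> is_saddle (SI_S beta0) (SI_I beta0 mu r a) p S I).
Proof.
  intros hnear heq; destruct (near_star_facts _ _ hnear) as (hS & hu & hsign & hx).
  assert (hI : I <> 0) by (intros ->; lra).
  rewrite SI_equilibrium_iff in heq by lra; destruct heq as [hSeq hIeq].
  assert (hfac : 0 < 2 * q + beta0 * (I - Istar)).
  { apply Rabs_def2 in hx as [hx1 hx2].
    assert (beta0 * (q / beta0) = q) by (field; lra); nra. }
  assert (hdet : I * (beta0 ^ 2 * (a + I) ^ 2 - r) =
                 beta0 * (2 * q + beta0 * (I - Istar)) * (I * (I - Istar)))
    by (rewrite SI_det_factor; ring).
  assert (hIstar2 : 0 < Istar * Istar) by (pose proof Istar_neq0; nra).
  assert (hcoef : 0 < beta0 * (2 * q + beta0 * (I - Istar))) by nra.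
  split; intro hx0.
  - apply SI_sink; try lra; rewrite hdet; apply Rmult_lt_0_compat; [exact hcoef | ].
    assert (0 < Istar * (I - Istar) * (Istar * I)) by (apply Rmult_lt_0_compat; lra); nra.
  - apply SI_saddle; try lra; rewrite hdet; apply Rmult_pos_neg; [exact hcoef | ].
    assert (Istar * (I - Istar) * (Istar * I) < 0) by (apply Rmult_neg_pos; lra); nra.
Qed.

Lemma equilibrium_at_threshold_unique S I : near_pt radius Sstar Istar S I ->
  is_equilibrium (SI_S beta0) (SI_I beta0 mu r a) Astar S I -> S = Sstar /\ I = Istar.
Proof.
  intros hnear heq; destruct (parabola_of_equilibrium _ _ _ hnear heq) as [-> hpar].
  rewrite Rminus_diag, Rmult_0_l in hpar.
  apply Rmult_integral in hpar as [hb0 | hpar]; [lra | ].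
  rewrite <- Rsqr_pow2 in hpar; apply Rsqr_0_uniq, Rminus_diag_uniq in hpar as ->.
  split; reflexivity.
Qed.

Lemma no_equilibrium_below p S I : p < Astar -> near_pt radius Sstar Istar S I ->
  ~ is_equilibrium (SI_S beta0) (SI_I beta0 mu r a) p S I.
Proof.
  intros hp hnear heq; destruct (parabola_of_equilibrium _ _ _ hnear heq) as [_ hpar].
  destruct (near_star_facts _ _ hnear) as (_ & hu & _).
  replace (I - Istar + q / beta0) with (a + I) in hpar by (rewrite <- a_add_Istar; ring).
  assert (0 <= beta0 * (I - Istar) ^ 2) by (apply Rmult_le_pos; [lra | apply pow2_ge_0]).
  nra.
Qed.

Lemma equilibrium_of_root p x : 0 < p - Astar < window (radius / 2) ->
  beta0 * x ^ 2 = (p - Astar) * (x + q / beta0) ->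
  near_pt radius Sstar Istar (p - beta0 * (Istar + x)) (Istar + x) /\
  endemic (p - beta0 * (Istar + x)) (Istar + x) /\
  is_equilibrium (SI_S beta0) (SI_I beta0 mu r a) p (p - beta0 * (Istar + x)) (Istar + x).
Proof.
  intros ht hroot.
  assert (hrad : 0 < radius / 2) by (pose proof radius_pos; lra).
  pose proof (window_lt _ hrad).
  assert (hx : Rabs x < radius / 2)
    by (apply (parabola_root_small beta0 (q / beta0) (p - Astar));
        [lra | apply Rdiv_lt_0_compat | lra | lra | apply ht | exact hroot]; lra).
  assert (hnear : near_pt radius Sstar Istar (p - beta0 * (Istar + x)) (Istar + x))
    by (apply near_star_of_small; [lra | replace (Istar + x - Istar) with x by ring; exact hx]).
  destruct (near_star_facts _ _ hnear) as (hS & hu & hsign & _).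
  assert (hI : Istar + x <> 0) by (intros h; rewrite h in hsign; lra).
  split; [exact hnear | split; [exact hI | ]].
  apply SI_equilibrium_parabola; try lra; split; [reflexivity | ].
  replace (Istar + x - Istar) with x by ring.
  replace (a + (Istar + x)) with (x + q / beta0) by (rewrite <- a_add_Istar; ring).
  exact hroot.
Qed.

Lemma two_equilibria_above p : 0 < p - Astar < window (radius / 2) ->
  exists x1 y1 x2 y2,
    near_pt radius Sstar Istar x1 y1 /\ endemic x1 y1 /\
      is_equilibrium (SI_S beta0) (SI_I beta0 mu r a) p x1 y1 /\
      is_sink (SI_S beta0) (SI_I beta0 mu r a) p x1 y1 /\
    near_pt radius Sstar Istar x2 y2 /\ endemic x2 y2 /\
      is_equilibrium (SI_S beta0) (SI_I beta0 mu r a) p x2 y2 /\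
      is_saddle (SI_S beta0) (SI_I beta0 mu r a) p x2 y2 /\
    (forall x y, near_pt radius Sstar Istar x y -> endemic x y ->
       is_equilibrium (SI_S beta0) (SI_I beta0 mu r a) p x y ->
       (x = x1 /\ y = y1) \/ (x = x2 /\ y = y2)).
Proof.
  intro ht.
  destruct (parabola_two_roots beta0 (q / beta0) (p - Astar)) as (xn & xp & [hxn hxp] & hroots);
    [lra | apply Rdiv_lt_0_compat; lra | lra | ].
  destruct (equilibrium_of_root p xn ht) as (hnearn & hendn & heqn);
    [apply hroots; left; reflexivity | ].
  destruct (equilibrium_of_root p xp ht) as (hnearp & hendp & heqp);
    [apply hroots; right; reflexivity | ].
  destruct (SI_classify_near _ _ _ hnearn heqn) as [hsinkn hsaddlen].
  destruct (SI_classify_near _ _ _ hnearp heqp) as [hsinkp hsaddlep].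
  replace (Istar + xn - Istar) with xn in * by ring.
  replace (Istar + xp - Istar) with xp in * by ring.
  assert (hall : forall S I, near_pt radius Sstar Istar S I ->
            is_equilibrium (SI_S beta0) (SI_I beta0 mu r a) p S I ->
            (S = p - beta0 * (Istar + xn) /\ I = Istar + xn) \/
            (S = p - beta0 * (Istar + xp) /\ I = Istar + xp)).
  { intros S I hnear heq; destruct (parabola_of_equilibrium _ _ _ hnear heq) as [-> hpar].
    apply hroots in hpar as [<- | <-]; [left | right];
      replace (Istar + (I - Istar)) with I by ring; split; reflexivity. }
  destruct (Rlt_or_le 0 Istar) as [hpos | hneg].
  - exists (p - beta0 * (Istar + xp)), (Istar + xp), (p - beta0 * (Istar + xn)), (Istar + xn).
    repeat (split; [assumption | ]); split; [apply hsinkp; nra | ].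
    repeat (split; [assumption | ]); split; [apply hsaddlen; nra | ].
    intros S I hnear _ heq; destruct (hall S I hnear heq); tauto.
  - assert (Istar < 0) by (pose proof Istar_neq0; lra).
    exists (p - beta0 * (Istar + xn)), (Istar + xn), (p - beta0 * (Istar + xp)), (Istar + xp).
    repeat (split; [assumption | ]); split; [apply hsinkn; nra | ].
    repeat (split; [assumption | ]); split; [apply hsaddlep; nra | ].
    intros S I hnear _ heq; destruct (hall S I hnear heq); tauto.
Qed.

Lemma equilibria_converge eta : 0 < eta -> exists eps, 0 < eps /\
  forall p, 0 < p - Astar < eps -> forall S I, near_pt radius Sstar Istar S I ->
    is_equilibrium (SI_S beta0) (SI_I beta0 mu r a) p S I -> near_pt eta Sstar Istar S I.
Proof.
  intro heta; assert (heta2 : 0 < eta / 2) by lra.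
  exists (window (eta / 2)); split; [exact (window_pos _ heta2) | ].
  intros p ht S I hnear heq; pose proof (window_lt _ heta2).
  destruct (parabola_of_equilibrium _ _ _ hnear heq) as [-> hpar].
  apply near_star_of_small; [lra | ].
  apply (parabola_root_small beta0 (q / beta0) (p - Astar));
    [lra | apply Rdiv_lt_0_compat | lra | lra | apply ht | exact hpar]; lra.
Qed.

End Threshold.

Theorem lemma5p3 (r beta0 a mu : R)
  (hr : 0 < r) (hb : 0 < beta0) (ha : 0 < a) (hmu : 0 < mu) (hb1 : beta0 < 1)
  (hnd : a * beta0 <> sqrt r) (Astar : R)
  (hA : basic_R0 beta0 mu r a Astar = phi0 beta0 mu r a) :
  saddle_node_bifurcation (SI_S beta0) (SI_I beta0 mu r a) endemic Astar.
Proof.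
  pose proof (threshold_Astar _ _ _ _ _ hr hb ha hmu hA) as hAstar.
  pose proof (sqrt_lt_R0 r hr) as hq0.
  pose proof (sqrt_sqrt r (Rlt_le _ _ hr)) as hq.
  set (q := sqrt r) in *.
  exists (Sstar beta0 a q Astar), (Istar beta0 a q).
  split; [eapply Istar_neq0; eassumption | ].
  split; [eapply Sstar_Istar_equilibrium; eassumption | ].
  split; [eapply Sstar_Istar_zero_eigenvalue; eassumption | ].
  assert (hd : 0 < radius beta0 a q Astar) by (eapply (radius_pos beta0 mu r); eassumption).
  exists (radius beta0 a q Astar), (window beta0 q (radius beta0 a q Astar / 2)), (-1).
  split; [exact hd | split; [eapply window_pos; eauto; lra | split; [right; reflexivity | ]]].
  split.
  { intros S I hnear _; eapply equilibrium_at_threshold_unique; eassumption. }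
  split.
  { intros p hp S I hnear _; eapply no_equilibrium_below; try eassumption; lra. }
  split.
  { intros p hp; eapply two_equilibria_above; try eassumption; lra. }
  intros eta heta.
  destruct (equilibria_converge _ _ _ _ _ _ hb hb1 ha hq0 hq hnd hAstar eta heta)
    as (eps & heps & hconv).
  exists eps; split; [exact heps | ].
  intros p hp S I hnear _; apply (hconv p); [lra | exact hnear].
Qed.
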